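(* Assume $\mathrm{NF}_{\mathrm{fin}}(G_0,G_1,G_2,G_3)$. Then: (1) $\mathrm{NF}_{\mathrm{fin}}(G_0,G_2,G_1,G_3)$ holds. (2) If $G_0 \subseteq G_\ell' \subseteq G_\ell$ are subgroups for $\ell = 1,2$ and $G_1' \cup G_2' \subseteq G_3' \subseteq G_3$ with $G_3'$ a subgroup, then $\mathrm{NF}_{\mathrm{rfin}}(G_0,G_1',G_2',G_3')$. (3) If $\mathrm{NF}_{\mathrm{fin}}(G_0',G_1',G_2',G_3')$, $G_3'$ is generated by $G_1' \cup G_2'$, and $f_\ell$ is an isomorphism from $G_\ell'$ onto $G_\ell$ for $\ell = 0,1,2$ with $f_1\restriction G_0' = f_0 = f_2 \restriction G_0'$, then there is an embedding $f_3$ of $G_3'$ into $G_3$ extending $f_1 \cup f_2$. (4) If $\bar a$ is a finite sequence from $G_2$, then $\mathrm{tp}_{\mathrm{bs}}(\bar a,G_1,G_3)$ does not split over $G_0$.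
   Context: A group is locally finite if every finitely generated subgroup is finite. An amalgamation try is $\mathbf{x} = (G_{\mathbf{x},0},G_{\mathbf{x},1},G_{\mathbf{x},2},\mathbf{I}_{\mathbf{x},1},\mathbf{I}_{\mathbf{x},2})$ where $G_{\mathbf{x},1},G_{\mathbf{x},2}$ are locally finite groups with common subgroup $G_{\mathbf{x},0}$, $\mathbf{I}_{\mathbf{x},\ell}$ is a set of representatives (without repetition) of the left cosets of $G_{\mathbf{x},0}$ in $G_{\mathbf{x},\ell}$, and $e \in \mathbf{I}_{\mathbf{x},1}\cap\mathbf{I}_{\mathbf{x},2}$. With $\mathcal{U}_{\mathbf{x}} = \{(g_0,g_1,g_2): g_0 \in G_{\mathbf{x},0}, g_\ell \in \mathbf{I}_{\mathbf{x},\ell}\}$, for $g \in G_{\mathbf{x},1}$ the permutation $\mathbf{j}_{\mathbf{x},1}(g)$ maps $(g_0,g_1,g_2)$ to $(g_0',g_1',g_2)$ where $(g_1',g_0') \in \mathbf{I}_{\mathbf{x},1}\times G_{\mathbf{x},0}$ is unique with $g_1'g_0' = g_1g_0g$; symmetrically $\mathbf{j}_{\mathbf{x},2}(g)$ for $g \in G_{\mathbf{x},2}$ maps $(g_0,g_1,g_2)$ to $(g_0',g_1,g_2')$ with $g_2'g_0' = g_2g_0g$. Permutations act on the right and $G_{\mathbf{x}}$ is the permutation group generated by $\mathbf{j}_{\mathbf{x},1}(G_{\mathbf{x},1}) \cup \mathbf{j}_{\mathbf{x},2}(G_{\mathbf{x},2})$. $\mathrm{NF}_{\mathrm{fin}}(G_0,G_1,G_2,G_3)$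 means: $G_0,G_1,G_2$ are finite groups, $G_3$ is locally finite, $G_0 \subseteq G_\ell \subseteq G_3$ ($\ell=1,2$), $G_3 = \langle G_1 \cup G_2\rangle$; for every amalgamation try $\mathbf{x}$ with $G_{\mathbf{x},0} = G_0$, $G_\ell \subseteq G_{\mathbf{x},\ell}$ ($\ell=1,2$) there is a homomorphism $\mathbf{f}: G_3 \to G_{\mathbf{x}}$ with $\mathbf{f}\restriction G_\ell = \mathbf{j}_{\mathbf{x},\ell}\restriction G_\ell$; and for every $a \in G_3\setminus\{e\}$ some such $\mathbf{x},\mathbf{f}$ has $\mathbf{f}(a)\neq e$. $\mathrm{NF}_{\mathrm{rfin}}(G_0,G_1,G_2,G_3)$ means $G_1, G_2$ are subgroups of the locally finite group $G_3$ and $\mathrm{NF}_{\mathrm{fin}}(G_0,G_1,G_2,\langle G_1\cup G_2\rangle_{G_3})$. For $A \subseteq H$ and a tuple $\bar a$ from $H$, $\mathrm{tp}_{\mathrm{bs}}(\bar a,A,H)$ is the set of formulas $\sigma(\bar x,\bar b) = e$ and $\sigma(\bar x,\bar b) \neq e$ ($\sigma$ a group word, $\bar b$ a finite tuple from $A$) satisfied by $\bar a$ in $H$. For $K \subseteq G \subseteq H$, the type $\mathrm{tp}_{\mathrm{bs}}(\bar a,G,H)$ does not split over $K$ if for every $m$ and $\bar b_1,\bar b_2 \in G^m$ with $\mathrm{tp}_{\mathrm{bs}}(\bar b_1,K,G) = \mathrm{tp}_{\mathrm{bs}}(\bar b_2,K,G)$ we have $\mathrm{tp}_{\mathrm{bs}}(\bar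 b_1{}^\frown\bar a,K,H) = \mathrm{tp}_{\mathrm{bs}}(\bar b_2{}^\frown \bar a,K,H)$. *)

(* groups are mathcomp's (possibly infinite) [groupType]
   from boot/monoid.v; subgroups are Prop-valued predicates on the carrier. *)
From HB Require Import structures.
From mathcomp Require Import all_boot.

Set Implicit Arguments.
Unset Strict Implicit.
Unset Printing Implicit Defensive.

Local Open Scope group_scope.

Definition is_subgroup (G : groupType) (P : G -> Prop) : Prop :=
  P 1 /\ (forall x y, P x -> P y -> P (x * y)) /\ (forall x, P x -> P x^-1).

Definition incl_set (T : Type) (P Q : T -> Prop) : Prop := forall x, P x -> Q x.

Definition unionP (T : Type) (P Q : T -> Prop) : T -> Prop := fun x => P x \/ Q x.

Definition finiteP (T : eqType) (P : T -> Prop) : Prop :=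
  exists s : seq T, forall x, P x <-> x \in s.

Inductive gen (G : groupType) (A : G -> Prop) : G -> Prop :=
| gen_in x : A x -> gen A x
| gen_one : gen A 1
| gen_mul x y : gen A x -> gen A y -> gen A (x * y)
| gen_inv x : gen A x -> gen A x^-1.

Definition locally_finite (G : groupType) (P : G -> Prop) : Prop :=
  forall s : seq G, (forall x, x \in s -> P x) ->
    finiteP (gen (fun x => x \in s)).

Definition generated_by (G : groupType) (P3 P1 P2 : G -> Prop) : Prop :=
  forall x, P3 x <-> gen (unionP P1 P2) x.

Definition is_emb (G H : groupType) (P : G -> Prop) (f : G -> H) : Prop :=
  (forall x y, P x -> P y -> f (x * y) = f x * f y) /\
  (forall x y, P x -> P y -> f x = f y -> x = y).

Definition is_iso_onto (G H : groupType) (P : G -> Prop) (Q : H -> Prop)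
    (f : G -> H) : Prop :=
  is_emb P f /\ (forall x, P x -> Q (f x)) /\
  (forall y, Q y -> exists x, P x /\ f x = y).

Definition coset_reps (G H : groupType) (P0 : G -> Prop) (e : G -> H)
    (I : H -> Prop) : Prop :=
  I 1 /\
  (forall h, exists r, I r /\ exists g0, P0 g0 /\ h = r * e g0) /\
  (forall r r', I r -> I r' -> (exists g0, P0 g0 /\ r' = r * e g0) -> r = r').

(* An amalgamation try x with G_{x,0} = G0 and G_l \subseteq G_{x,l}:
   the locally finite groups G_{x,l} are H1, H2, containing G_l via the
   embeddings e1, e2 (so that G0 is their common subgroup), and I1, I2 are the
   sets of coset representatives. *)
Definition is_try (G H1 H2 : groupType) (P0 P1 P2 : G -> Prop)
    (e1 : G -> H1) (e2 : G -> H2) (I1 : H1 -> Prop) (I2 : H2 -> Prop) : Prop :=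
  locally_finite (fun _ : H1 => True) /\ locally_finite (fun _ : H2 => True) /\
  is_emb P1 e1 /\ is_emb P2 e2 /\
  coset_reps P0 e1 I1 /\ coset_reps P0 e2 I2.

Section Try.
Variables (G H1 H2 : groupType) (P0 : G -> Prop)
  (e1 : G -> H1) (e2 : G -> H2) (I1 : H1 -> Prop) (I2 : H2 -> Prop).

(* elements (g0, g1, g2) of U_x are encoded as ((g0, g1), g2) *)
Definition Ux := (G * H1 * H2)%type.

Definition inUx (u : Ux) : Prop := P0 u.1.1 /\ I1 u.1.2 /\ I2 u.2.

(* graph of the permutation j_{x,1}(g) *)
Definition j1rel (g : H1) (u v : Ux) : Prop :=
  v.2 = u.2 /\ P0 v.1.1 /\ I1 v.1.2 /\ v.1.2 * e1 v.1.1 = u.1.2 * e1 u.1.1 * g.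

(* graph of the permutation j_{x,2}(g) *)
Definition j2rel (g : H2) (u v : Ux) : Prop :=
  v.1.2 = u.1.2 /\ P0 v.1.1 /\ I2 v.2 /\ v.2 * e2 v.1.1 = u.2 * e2 u.1.1 * g.

Fixpoint genrel (ws : seq (H1 + H2)) (u v : Ux) : Prop :=
  match ws with
  | [::] => v = u
  | w :: ws' =>
      exists m, (match w with inl g => j1rel g u m | inr g => j2rel g u m end)
                /\ genrel ws' m v
  end.

(* sigma (restricted to U_x) belongs to G_x, the permutation group generated
   by j_{x,1}(G_{x,1}) u j_{x,2}(G_{x,2}) (as these sets are closed under
   inverses, G_x is the set of finite products of generators) *)
Definition in_Gx (sigma : Ux -> Ux) : Prop :=
  exists ws, forall u, inUx u -> genrel ws u (sigma u).

(* f : G3 -> G_x is a homomorphism (permutations act on the right) with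
   f|G_l = j_{x,l}|G_l *)
Definition hom_to_Gx (P1 P2 P3 : G -> Prop) (f : G -> Ux -> Ux) : Prop :=
  (forall a, P3 a -> in_Gx (f a)) /\
  (forall a b, P3 a -> P3 b -> forall u, inUx u -> f (a * b) u = f b (f a u)) /\
  (forall g, P1 g -> forall u, inUx u -> j1rel (e1 g) u (f g u)) /\
  (forall g, P2 g -> forall u, inUx u -> j2rel (e2 g) u (f g u)).

End Try.

Definition NF_fin (G : groupType) (P0 P1 P2 P3 : G -> Prop) : Prop :=
  finiteP P0 /\ finiteP P1 /\ finiteP P2 /\
  is_subgroup P0 /\ is_subgroup P1 /\ is_subgroup P2 /\ is_subgroup P3 /\
  locally_finite P3 /\
  incl_set P0 P1 /\ incl_set P0 P2 /\ incl_set P1 P3 /\ incl_set P2 P3 /\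
  generated_by P3 P1 P2 /\
  (forall (H1 H2 : groupType) (e1 : G -> H1) (e2 : G -> H2)
          (I1 : H1 -> Prop) (I2 : H2 -> Prop),
      is_try P0 P1 P2 e1 e2 I1 I2 ->
      exists f, hom_to_Gx P0 e1 e2 I1 I2 P1 P2 P3 f) /\
  (forall a, P3 a -> a <> 1 ->
     exists (H1 H2 : groupType) (e1 : G -> H1) (e2 : G -> H2)
            (I1 : H1 -> Prop) (I2 : H2 -> Prop),
       is_try P0 P1 P2 e1 e2 I1 I2 /\
       exists f, hom_to_Gx P0 e1 e2 I1 I2 P1 P2 P3 f /\
         exists u, inUx P0 I1 I2 u /\ f a u <> u).

Definition NF_rfin (G : groupType) (P0 P1 P2 P3 : G -> Prop) : Prop :=
  is_subgroup P3 /\ locally_finite P3 /\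
  is_subgroup P1 /\ is_subgroup P2 /\ incl_set P1 P3 /\ incl_set P2 P3 /\
  NF_fin P0 P1 P2 (gen (unionP P1 P2)).

Inductive word : Type :=
| WVar of nat
| WOne
| WMul of word & word
| WInv of word.

Fixpoint weval (G : groupType) (v : nat -> G) (w : word) : G :=
  match w with
  | WVar i => v i
  | WOne => 1
  | WMul w1 w2 => weval v w1 * weval v w2
  | WInv w1 => (weval v w1)^-1
  end.

Fixpoint scoped (n : nat) (w : word) : bool :=
  match w with
  | WVar i => i < n
  | WOne => true
  | WMul w1 w2 => scoped n w1 && scoped n w2
  | WInv w1 => scoped n w1
  end.

(* A basic formula over parameters is a triple (sigma, bs, pos): the formula
   sigma(x_0..x_{n-1}, bs) = e  (pos = true)  or  <> e  (pos = false), where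
   variable i < n stands for x_i and variable n + j for the parameter bs_j.
   tp_bs xs A is the set of such formulas with parameters from A satisfied by
   the tuple xs (evaluated in the ambient group G, which is also the group
   of all subgroups considered). *)
Definition tp_bs (G : groupType) (xs : seq G) (A : G -> Prop)
    (phi : word * seq G * bool) : Prop :=
  let: (w, bs, pos) := phi in
  scoped (size xs + size bs) w /\ (forall b, b \in bs -> A b) /\
  (if pos then weval (fun i => nth 1 (xs ++ bs) i) w = 1
   else weval (fun i => nth 1 (xs ++ bs) i) w <> 1).

Definition same_tp (G : groupType) (xs ys : seq G) (A : G -> Prop) : Prop :=
  forall phi, tp_bs xs A phi <-> tp_bs ys A phi.

Definition does_not_split (G : groupType) (a : seq G) (Gs K : G -> Prop) : Prop :=
  forall b1 b2 : seq G, size b1 = size b2 ->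
    (forall x, x \in b1 -> Gs x) -> (forall x, x \in b2 -> Gs x) ->
    same_tp b1 b2 K -> same_tp (b1 ++ a) (b2 ++ a) K.

(* The key fact is that, for subgroups [P0 <= A_l <= P_l] and any
   amalgamation try [x] built on embeddings of the [A_l], two spellings of the
   same element of [<A_1 u A_2>] by letters from [A_1] and [A_2] act in the
   same way on [U_x] (genrel_letters_eq). To see it, fix a base point [u0] of
   [U_x] and build a second try inside the finite group [P3] itself: inside
   [A_l] its coset representatives are the [a] for which [u0_l * phi_l a] is a
   representative of [x]. The NF_fin homomorphism for this try sends the
   product of a word to a permutation that tracks the action of the word on
   [u0], so this action only depends on the product.
   Words therefore spell homomorphisms. This gives (2) directly, and, combined
   with the separating tries of NF_fin, the extension (3) of isomorphisms and
   the non-splitting (4): extend the partial isomorphism [b1 |-> b2] over [P0]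
   by the identity of [P2]. Part (1) is the symmetry of the definitions under
   exchanging the two factors of [U_x]. *)

From HB Require Import structures.
From mathcomp Require Import all_boot zify.
From Stdlib Require Import Classical ClassicalEpsilon.
From Stdlib Require Import FunctionalExtensionality PropExtensionality.

Set Implicit Arguments.
Unset Strict Implicit.
Unset Printing Implicit Defensive.
Local Open Scope group_scope.

Definition to_pred (T : Type) (P : T -> Prop) : pred T :=
  fun x => if excluded_middle_informative (P x) then true else false.

Lemma to_predE (T : Type) (P : T -> Prop) x : to_pred P x <-> P x.
Proof. by rewrite /to_pred; case: excluded_middle_informative. Qed.

Lemma finiteP_sub (T : eqType) (P Q : T -> Prop) :
  finiteP Q -> incl_set P Q -> finiteP P.
Proof.
case=> s Qs PQ; exists [seq x <- s | to_pred P x] => x.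
rewrite mem_filter; split; first by move=> Px; rewrite (to_predE P x).2 //; apply/Qs/PQ.
by case/andP=> /to_predE.
Qed.

Section Homomorphisms.
Variables (G H : groupType) (P : G -> Prop) (f : G -> H).

Definition is_hom_on := forall x y, P x -> P y -> f (x * y) = f x * f y.

Hypotheses (sP : is_subgroup P) (hf : is_hom_on).

Lemma hom1 : f 1 = 1.
Proof. by case: sP => P1 _; apply: (@mulgI _ (f 1)); rewrite -hf // !mulg1. Qed.

Lemma homV x : P x -> f x^-1 = (f x)^-1.
Proof.
move=> Px; case: sP => _ [_ PV]; symmetry; apply: mulg1_eq.
by rewrite -hf ?mulgV ?hom1 //; apply: PV.
Qed.

End Homomorphisms.

Lemma emb_hom (G H : groupType) (P : G -> Prop) (f : G -> H) :
  is_emb P f -> is_hom_on P f.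
Proof. by case. Qed.

Lemma is_emb_sub (G H : groupType) (P Q : G -> Prop) (f : G -> H) :
  is_emb P f -> incl_set Q P -> is_emb Q f.
Proof. by case=> fM fI QP; split=> x y Qx Qy; [apply: fM | apply: fI]; apply: QP. Qed.

Lemma is_emb_comp (G H K : groupType) (A : G -> Prop) (P : H -> Prop)
    (f : G -> H) (e : H -> K) :
  is_emb A f -> (forall x, A x -> P (f x)) -> is_emb P e -> is_emb A (e \o f).
Proof.
move=> [fM fI] fP [eM eI]; split=> x y Ax Ay /=; first by rewrite fM ?eM //; apply: fP.
by move=> /eI E; apply: fI => //; apply: E; apply: fP.
Qed.

Section Generation.
Variable G : groupType.
Implicit Types (A B S : G -> Prop).

Lemma gen_subset A S : is_subgroup S -> incl_set A S -> incl_set (gen A) S.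
Proof.
case=> S1 [SM SV] AS x; elim=> //; by [apply: AS | move=> *; apply: SM | move=> *; apply: SV].
Qed.

Lemma gen_mono A B : incl_set A B -> incl_set (gen A) (gen B).
Proof.
by move=> AB x; elim=> *;
  [apply: gen_in; apply: AB | apply: gen_one | apply: gen_mul | apply: gen_inv].
Qed.

Lemma gen_subgroup A : is_subgroup (gen A).
Proof. split; [exact: gen_one | split; [exact: gen_mul | exact: gen_inv]]. Qed.

Lemma gen_hom_eq (H : groupType) A (f f' : G -> H) :
  is_hom_on (gen A) f -> is_hom_on (gen A) f' ->
  (forall x, A x -> f x = f' x) -> forall x, gen A x -> f x = f' x.
Proof.
move=> hf hf' Eff' x; elim=> {x} [x /Eff' //| | x y Ax Ex Ay Ey| x Ax Ex].
- by rewrite (hom1 (gen_subgroup A) hf) (hom1 (gen_subgroup A) hf').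
- by rewrite hf ?hf' ?Ex ?Ey.
- by rewrite (homV (gen_subgroup A) hf) ?(homV (gen_subgroup A) hf') ?Ex.
Qed.

End Generation.

(* Elements of [gen (unionP A B)] are spelled as lists of letters:
   [inl x] stands for a letter x from A, [inr x] for a letter x from B. *)
Section Letters.
Variable G : groupType.
Implicit Types (A B S : G -> Prop) (l : seq (G + G)).

Definition lval (z : G + G) : G := match z with inl x => x | inr x => x end.

Definition lprod l : G := foldr (fun z p => lval z * p) 1 l.

Fixpoint letters_in A B l : Prop :=
  match l with
  | [::] => True
  | z :: l' => (match z with inl x => A x | inr x => B x end) /\ letters_in A B l'
  end.

Definition linv l : seq (G + G) :=
  rev (map (fun z => match z with inl x => inl x^-1 | inr x => inr x^-1 end) l).

Lemma lprod_cat l1 l2 : lprod (l1 ++ l2) = lprod l1 * lprod l2.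
Proof. by elim: l1 => [|z l IH] /=; rewrite ?mul1g // IH mulgA. Qed.

Lemma lprod_linv l : lprod (linv l) = (lprod l)^-1.
Proof.
elim: l => [|z l IH]; first by rewrite /= invg1.
rewrite /linv /= rev_cons -cats1 lprod_cat -/(linv l) IH invgM /= mulg1.
by case: z.
Qed.

Lemma letters_in_cat A B l1 l2 :
  letters_in A B l1 -> letters_in A B l2 -> letters_in A B (l1 ++ l2).
Proof. by elim: l1 => [|z l IH] //= [H1 H2] H3; split=> //; apply: IH. Qed.

Lemma letters_in_linv A B l :
  is_subgroup A -> is_subgroup B -> letters_in A B l -> letters_in A B (linv l).
Proof.
move=> [_ [_ AV]] [_ [_ BV]]; elim: l => [|z l IH] //= [Hz Hl].
rewrite /linv /= rev_cons -cats1; apply: letters_in_cat; first exact: IH.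
by case: z Hz => x /= Hx; split=> //; [apply: AV | apply: BV].
Qed.

Lemma gen_union_letters A B x : is_subgroup A -> is_subgroup B ->
  gen (unionP A B) x -> exists l, letters_in A B l /\ lprod l = x.
Proof.
move=> sA sB; elim=> {x}.
- move=> x [Ax|Bx]; [exists [:: inl x] | exists [:: inr x]]; by rewrite /= mulg1.
- by exists [::].
- move=> x y _ [l1 [g1 <-]] _ [l2 [g2 <-]]; exists (l1 ++ l2).
  by split; [exact: letters_in_cat | exact: lprod_cat].
- move=> x _ [l [g <-]]; exists (linv l).
  by split; [exact: letters_in_linv | exact: lprod_linv].
Qed.

Lemma lprod_in S A B l : is_subgroup S -> incl_set A S -> incl_set B S ->
  letters_in A B l -> S (lprod l).
Proof.
move=> [S1 [SM _]] AS BS; elim: l => [|[x|x] l IH] //= [Hx Hl]; apply: SM; auto.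
Qed.

Lemma letters_in_gen A B l : letters_in A B l -> gen (unionP A B) (lprod l).
Proof.
by apply: lprod_in; [exact: gen_subgroup | move=> x Ax | move=> x Bx];
  apply: gen_in; [left | right].
Qed.

Definition spelling A B (x : G) : seq (G + G) :=
  epsilon (inhabits [::]) (fun l => letters_in A B l /\ lprod l = x).

Lemma spellingP A B x : is_subgroup A -> is_subgroup B -> gen (unionP A B) x ->
  letters_in A B (spelling A B x) /\ lprod (spelling A B x) = x.
Proof.
move=> sA sB Ax.
apply: (epsilon_spec _ (fun l => letters_in A B l /\ lprod l = x)).
exact: gen_union_letters.
Qed.

End Letters.

Definition lmap (G K1 K2 : Type) (f1 : G -> K1) (f2 : G -> K2) (l : seq (G + G)) :
    seq (K1 + K2) :=
  map (fun z => match z with inl x => inl (f1 x) | inr x => inr (f2 x) end) l.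

Lemma lmap_comp (G K L1 L2 : Type) (f1 f2 : G -> K) (g1 : K -> L1) (g2 : K -> L2) l :
  lmap g1 g2 (lmap f1 f2 l) = lmap (g1 \o f1) (g2 \o f2) l.
Proof. by rewrite /lmap -map_comp; apply: eq_map => -[]. Qed.

Lemma letters_in_lmap (G K : groupType) (A1 A2 : G -> Prop) (B1 B2 : K -> Prop)
    (f1 f2 : G -> K) l :
  (forall x, A1 x -> B1 (f1 x)) -> (forall x, A2 x -> B2 (f2 x)) ->
  letters_in A1 A2 l -> letters_in B1 B2 (lmap f1 f2 l).
Proof. move=> h1 h2; elim: l => [|[x|x] l IH] //= [Hx Hl]; split; auto. Qed.

Section CosetReps.
Variables (G H : groupType) (P0 : G -> Prop) (e : G -> H) (I : H -> Prop).
Hypotheses (sP0 : is_subgroup P0) (he : is_emb P0 e) (hI : coset_reps P0 e I).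

Lemma coset_reps_ex h : exists r g0, I r /\ P0 g0 /\ h = r * e g0.
Proof. by case: hI => _ [Ex _]; case: (Ex h) => r [Ir [g0 [Pg ->]]]; exists r, g0. Qed.

Lemma coset_reps_uniq r r' a b : I r -> I r' -> P0 a -> P0 b ->
  r * e a = r' * e b -> r = r' /\ a = b.
Proof.
move=> Ir Ir' Pa Pb E; case: (sP0) => _ [PM PV]; case: hI => _ [_ U].
have rr : r = r'.
  apply: U => //; exists (a * b^-1); split; first by apply: PM => //; apply: PV.
  by rewrite (emb_hom he) ?(homV sP0 (emb_hom he)) ?mulgA ?E ?mulgK //; apply: PV.
split=> //; case: he => _; apply=> //; move: E; rewrite rr; exact: mulgI.
Qed.

End CosetReps.

Lemma coset_reps_comp (G G' H : groupType) (P0 : G -> Prop) (Q0 : G' -> Prop)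
    (f0 : G' -> G) (e : G -> H) (e' : G' -> H) (I : H -> Prop) :
  is_iso_onto Q0 P0 f0 -> (forall x, Q0 x -> e' x = e (f0 x)) ->
  coset_reps P0 e I -> coset_reps Q0 e' I.
Proof.
move=> [_ [fP fS]] Ee [I1 [Ex Un]]; split=> //; split.
- move=> h; have [r [Ir [g0 [Pg ->]]]] := Ex h; have [x [Qx <-]] := fS _ Pg.
  by exists r; split=> //; exists x; rewrite Ee.
- move=> r r' Ir Ir' [x [Qx E]]; apply: Un => //.
  by exists (f0 x); split; [exact: fP | rewrite E Ee].
Qed.

Section CosetRepsOn.
Variables (G : groupType) (P0 : G -> Prop).
Hypothesis sP0 : is_subgroup P0.

Definition coset_reps_on (S R : G -> Prop) : Prop :=
  [/\ R 1, forall x, S x -> exists r c, R r /\ P0 c /\ x = r * c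
     & forall r r' c, R r -> R r' -> P0 c -> r' = r * c -> r = r'].

Definition canon (x : G) : G :=
  epsilon (inhabits (1 : G)) (fun r => exists c, P0 c /\ r = x * c).

Lemma canonP x : exists c, P0 c /\ canon x = x * c.
Proof.
apply: (epsilon_spec _ (fun r => exists c, P0 c /\ r = x * c)).
by case: sP0 => P01 _; exists x, 1; rewrite mulg1.
Qed.

Lemma canon_coset x c : P0 c -> canon (x * c) = canon x.
Proof.
case: sP0 => _ [PM PV] Pc; rewrite /canon; congr epsilon.
apply: functional_extensionality => r; apply: propositional_extensionality; split.
- by case=> d [Pd ->]; exists (c * d); split; [apply: PM | rewrite mulgA].
- case=> d [Pd ->]; exists (c^-1 * d); split; first by apply: PM => //; apply: PV.
  by rewrite mulgA mulgK.
Qed.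

Lemma coset_reps_on_extend (A S R : G -> Prop) :
  is_subgroup A -> incl_set P0 A -> incl_set A S -> is_subgroup S ->
  incl_set R A -> coset_reps_on A R ->
  coset_reps_on S (fun x => R x \/ [/\ S x, ~ A x & x = canon x]).
Proof.
move=> [_ [AM AV]] P0A AS [_ [SM SV]] RA [R1 Rex Runiq].
have [_ [PM PV]] := sP0.
have A_coset x c : P0 c -> A (x * c) -> A x.
  by move=> Pc Axc; rewrite -(mulgK c x); apply: AM => //; apply/P0A/PV.
split; first by left.
- move=> x Sx; case: (classic (A x)) => [/Rex [r [c [Rr [Pc ->]]]]|nAx].
    by exists r, c; split=> //; left.
  have [c [Pc Ec]] := canonP x.
  exists (canon x), c^-1; split; last by split; [apply: PV | rewrite Ec mulgK].
  right; split; first by rewrite Ec; apply: SM => //; apply/AS/P0A.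
    by rewrite Ec => /(A_coset _ _ Pc).
  by rewrite Ec canon_coset.
- move=> r r' c Rr Rr' Pc Er; case: Rr => [Rr|[_ nAr Cr]].
    case: Rr' => [Rr'|[_ nAr' _]]; first exact: Runiq Rr Rr' Pc Er.
    by case: nAr'; rewrite Er; apply: AM; [apply: RA | apply: P0A].
  case: Rr' => [/RA Ar'|[_ _ Cr']]; first by case: nAr; rewrite Er in Ar'; exact: A_coset Ar'.
  by rewrite Cr Cr' Er canon_coset.
Qed.

Lemma coset_reps_on_translate (H : groupType) (A : G -> Prop) (phi : G -> H)
    (I : H -> Prop) (g : H) :
  is_subgroup A -> incl_set P0 A -> is_emb A phi -> coset_reps P0 phi I -> I g ->
  coset_reps_on A (fun a => A a /\ I (g * phi a)).
Proof.
move=> sA P0A hphi hI Ig; have [A1 [AM AV]] := sA; have [_ [_ PV]] := sP0.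
have hphi0 := is_emb_sub hphi P0A.
split; first by rewrite (hom1 sA (emb_hom hphi)) mulg1.
- move=> x Ax; have [r [c [Ir [Pc E]]]] := coset_reps_ex hI (g * phi x).
  have Axc : A (x * c^-1) by apply: AM => //; apply/P0A/PV.
  exists (x * c^-1), c; split; last by split=> //; rewrite mulgVK.
  split=> //; rewrite (emb_hom hphi) ?(homV sA (emb_hom hphi)) //; try exact: P0A.
    by rewrite mulgA E mulgK.
  exact/P0A/PV.
- move=> r r' c [Ar Ir] [Ar' Ir'] Pc Er.
  have [_ c1] : g * phi r = g * phi r' /\ c = 1.
    apply: (coset_reps_uniq sP0 hphi0 hI Ir Ir') => //; first by case: sP0.
    by rewrite (hom1 sP0 (emb_hom hphi0)) mulg1 Er (emb_hom hphi) ?mulgA //; exact: P0A.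
  by rewrite Er c1 mulg1.
Qed.

End CosetRepsOn.

Section SubgroupType.
Variables (G : groupType) (P : G -> Prop) (sP : is_subgroup P).

(* The otherwise unused proof argument makes the group structure below,
   which needs [sP], canonical on [subg sP]. *)
Definition subg of is_subgroup P : Type := {x : G | to_pred P x}.
HB.instance Definition _ := Choice.on (subg sP).

Let P1 : to_pred P 1. Proof. by apply/to_predE; case: sP. Qed.
Let PM x y : to_pred P x -> to_pred P y -> to_pred P (x * y).
Proof. by case: sP => _ [SM _] /to_predE Px /to_predE Py; apply/to_predE/SM. Qed.
Let PV x : to_pred P x -> to_pred P x^-1.
Proof. by case: sP => _ [_ SV] /to_predE Px; apply/to_predE/SV. Qed.

Definition subg_one : subg sP := exist _ 1 P1.
Definition subg_mul (x y : subg sP) : subg sP :=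
  exist _ (val x * val y) (PM (valP x) (valP y)).
Definition subg_inv (x : subg sP) : subg sP := exist _ (val x)^-1 (PV (valP x)).

Lemma subg_mulA : associative subg_mul.
Proof. by move=> x y z; apply: val_inj; rewrite /= mulgA. Qed.
Lemma subg_mul1 : left_id subg_one subg_mul.
Proof. by move=> x; apply: val_inj; rewrite /= mul1g. Qed.
Lemma subg_mulg1 : right_id subg_one subg_mul.
Proof. by move=> x; apply: val_inj; rewrite /= mulg1. Qed.
Lemma subg_mulV : left_inverse subg_one subg_inv subg_mul.
Proof. by move=> x; apply: val_inj; rewrite /= mulVg. Qed.
Lemma subg_mulgV : right_inverse subg_one subg_inv subg_mul.
Proof. by move=> x; apply: val_inj; rewrite /= mulgV. Qed.
HB.instance Definition _ :=
  isGroup.Build (subg sP) subg_mulA subg_mul1 subg_mulg1 subg_mulV subg_mulgV.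

(* Junk (= 1) outside [P]. *)
Definition insubg (x : G) : subg sP := insubd (1 : subg sP) x.

Lemma val_subgP (s : subg sP) : P (val s).
Proof. exact/to_predE/valP. Qed.

Lemma insubgK x : P x -> val (insubg x) = x.
Proof. by move=> Px; rewrite /insubg val_insubd (to_predE P x).2. Qed.

Lemma valK_insubg (s : subg sP) : insubg (val s) = s.
Proof. by apply: val_inj; rewrite insubgK //; apply: val_subgP. Qed.

Lemma insubg_emb (Q : G -> Prop) : incl_set Q P -> is_emb Q insubg.
Proof.
move=> QP; case: sP => _ [SM _].
split=> x y /QP Px /QP Py; last by move=> E; rewrite -(insubgK Px) -(insubgK Py) E.
by apply: val_inj; rewrite /= !insubgK //; apply: SM.
Qed.

Lemma subg_locally_finite : finiteP P -> locally_finite (fun _ : subg sP => True).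
Proof.
case=> t Ht s _; apply: (@finiteP_sub _ _ (fun _ : subg sP => True)) => //.
exists (map insubg t) => x; split=> // _.
by rewrite -(valK_insubg x); apply/map_f/Ht/val_subgP.
Qed.

Lemma coset_reps_subg (P0 R : G -> Prop) : incl_set P0 P ->
  coset_reps_on P0 P R -> coset_reps P0 insubg (fun s => R (val s)).
Proof.
move=> P0P [R1 Rex Runiq]; split; first exact: R1.
split.
- move=> s; have [r [c [Rr [Pc Es]]]] := Rex _ (val_subgP s).
  have Pr : P r.
    case: sP => _ [SM SV]; rewrite -(mulgK c r) -Es.
    by apply: SM; [apply: val_subgP | apply/SV/P0P].
  exists (insubg r); rewrite insubgK //; split=> //; exists c; split=> //.
  by apply: val_inj; rewrite /= !insubgK //; apply: P0P.
- move=> r r' Rr Rr' [c [Pc Er']]; apply: val_inj; apply: (Runiq _ _ c Rr Rr' Pc).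
  by rewrite Er' /= insubgK //; apply: P0P.
Qed.

End SubgroupType.

Definition swapU (G H1 H2 : groupType) (u : Ux G H1 H2) : Ux G H2 H1 := ((u.1.1, u.2), u.1.2).
Arguments swapU {G H1 H2}.

Lemma swapUK (G H1 H2 : groupType) (u : Ux G H1 H2) : swapU (swapU u) = u.
Proof. by case: u => [[]]. Qed.

Lemma inUx_swap (G H1 H2 : groupType) (P0 : G -> Prop) (I1 : H1 -> Prop) (I2 : H2 -> Prop) u :
  inUx P0 I1 I2 u -> inUx P0 I2 I1 (swapU u).
Proof. by case: u => [[a b] c] [? [? ?]]. Qed.

Lemma j2relE (G H1 H2 : groupType) (P0 : G -> Prop) (e2 : G -> H2) (I2 : H2 -> Prop)
    g (u v : Ux G H1 H2) :
  j2rel P0 e2 I2 g u v = j1rel P0 e2 I2 g (swapU u) (swapU v).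
Proof. by []. Qed.

Section GeneratorAction.
Variables (G H1 H2 : groupType) (P0 : G -> Prop) (e1 : G -> H1) (I1 : H1 -> Prop)
  (I2 : H2 -> Prop).
Hypotheses (sP0 : is_subgroup P0) (he1 : is_emb P0 e1) (hI1 : coset_reps P0 e1 I1).

Local Notation U := (inUx P0 I1 I2).
Local Notation J := (j1rel P0 e1 I1 (H2 := H2)).

Lemma j1rel_fun g u v v' : J g u v -> J g u v' -> v = v'.
Proof.
case: v v' => [[a b] c] [[a' b'] c'] [/= -> [Pa [Ib E]]] [/= -> [Pa' [Ib' E']]].
by have [-> ->] := coset_reps_uniq sP0 he1 hI1 Ib Ib' Pa Pa' (etrans E (esym E')).
Qed.

Lemma j1rel_total g u : exists v, J g u v.
Proof.
have [r [g0 [Ir [Pg E]]]] := coset_reps_ex hI1 (u.1.2 * e1 u.1.1 * g).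
by exists ((g0, r), u.2).
Qed.

Lemma j1rel_inUx g u v : U u -> J g u v -> U v.
Proof. by case: u v => [[a b] c] [[a' b'] c'] [_ [_ Ic]] [/= -> [Pa' [Ib' _]]]. Qed.

Lemma j1rel1 u : U u -> J 1 u u.
Proof. by case=> Pa [Ib Ic]; rewrite /j1rel mulg1. Qed.

End GeneratorAction.

Section GeneratedAction.
Variables (G H1 H2 : groupType) (P0 : G -> Prop) (e1 : G -> H1) (e2 : G -> H2)
  (I1 : H1 -> Prop) (I2 : H2 -> Prop).
Hypotheses (sP0 : is_subgroup P0) (he1 : is_emb P0 e1) (he2 : is_emb P0 e2)
  (hI1 : coset_reps P0 e1 I1) (hI2 : coset_reps P0 e2 I2).

Local Notation U := (inUx P0 I1 I2).
Local Notation GR := (genrel P0 e1 e2 I1 I2).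

Definition gen_step (w : H1 + H2) (u v : Ux G H1 H2) : Prop :=
  match w with inl g => j1rel P0 e1 I1 g u v | inr g => j2rel P0 e2 I2 g u v end.

Lemma gen_step_fun w u v v' : gen_step w u v -> gen_step w u v' -> v = v'.
Proof.
case: w => g /=; first exact: j1rel_fun.
by rewrite !j2relE => /(j1rel_fun sP0 he2 hI2) E /E /(congr1 swapU); rewrite !swapUK.
Qed.

Lemma gen_step_inUx w u v : U u -> gen_step w u v -> U v.
Proof.
case: w => g /=; first exact: j1rel_inUx.
rewrite j2relE => /inUx_swap Uu /(j1rel_inUx Uu) /inUx_swap.
by rewrite swapUK.
Qed.

Lemma gen_step_total w u : exists v, gen_step w u v.
Proof.
case: w => g /=; first exact: j1rel_total.
have [v Jv] := j1rel_total hI2 g (swapU u) (H2 := H1).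
by exists (swapU v); rewrite j2relE swapUK.
Qed.

Lemma genrel_fun ws u v v' : GR ws u v -> GR ws u v' -> v = v'.
Proof.
elim: ws u => [|w ws IH] u /=; first by move=> -> ->.
move=> [m [Hm Hv]] [m' [Hm' Hv']].
by have Em := gen_step_fun Hm Hm'; subst m'; apply: IH Hv Hv'.
Qed.

Lemma genrel_total ws u : exists v, GR ws u v.
Proof.
elim: ws u => [|w ws IH] u /=; first by exists u.
have [m Hm] := gen_step_total w u; have [v Hv] := IH m.
by exists v, m.
Qed.

Lemma genrel_cat ws1 ws2 u v w : GR ws1 u v -> GR ws2 v w -> GR (ws1 ++ ws2) u w.
Proof.
elim: ws1 u => [|w1 ws IH] u /=; first by move=> ->.
by move=> [m [Hm Hv]] Hw; exists m; split=> //; apply: IH Hv Hw.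
Qed.

End GeneratedAction.

Section NFProjections.
Variables (G : groupType) (P0 P1 P2 P3 : G -> Prop).
Hypothesis NF : NF_fin P0 P1 P2 P3.

Lemma NF_finite1 : finiteP P1.
Proof. by case: NF => _ [h _]. Qed.
Lemma NF_finite2 : finiteP P2.
Proof. by case: NF => _ [_ [h _]]. Qed.
Lemma NF_sub0 : is_subgroup P0.
Proof. by case: NF => _ [_ [_ [h _]]]. Qed.
Lemma NF_sub1 : is_subgroup P1.
Proof. by case: NF => _ [_ [_ [_ [h _]]]]. Qed.
Lemma NF_sub2 : is_subgroup P2.
Proof. by case: NF => _ [_ [_ [_ [_ [h _]]]]]. Qed.
Lemma NF_sub3 : is_subgroup P3.
Proof. by case: NF => _ [_ [_ [_ [_ [_ [h _]]]]]]. Qed.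
Lemma NF_lf3 : locally_finite P3.
Proof. by case: NF => _ [_ [_ [_ [_ [_ [_ [h _]]]]]]]. Qed.
Lemma NF_incl01 : incl_set P0 P1.
Proof. by case: NF => _ [_ [_ [_ [_ [_ [_ [_ [h _]]]]]]]]. Qed.
Lemma NF_incl02 : incl_set P0 P2.
Proof. by case: NF => _ [_ [_ [_ [_ [_ [_ [_ [_ [h _]]]]]]]]]. Qed.
Lemma NF_incl13 : incl_set P1 P3.
Proof. by case: NF => _ [_ [_ [_ [_ [_ [_ [_ [_ [_ [h _]]]]]]]]]]. Qed.
Lemma NF_incl23 : incl_set P2 P3.
Proof. by case: NF => _ [_ [_ [_ [_ [_ [_ [_ [_ [_ [_ [h _]]]]]]]]]]]. Qed.
Lemma NF_gen3 : generated_by P3 P1 P2.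
Proof. by case: NF => _ [_ [_ [_ [_ [_ [_ [_ [_ [_ [_ [_ [h _]]]]]]]]]]]]. Qed.

Lemma NF_hom (H1 H2 : groupType) (e1 : G -> H1) (e2 : G -> H2)
    (I1 : H1 -> Prop) (I2 : H2 -> Prop) :
  is_try P0 P1 P2 e1 e2 I1 I2 -> exists f, hom_to_Gx P0 e1 e2 I1 I2 P1 P2 P3 f.
Proof. by case: NF => _ [_ [_ [_ [_ [_ [_ [_ [_ [_ [_ [_ [_ [h _]]]]]]]]]]]]]; apply: h. Qed.

Lemma NF_sep a : P3 a -> a <> 1 ->
  exists (H1 H2 : groupType) (e1 : G -> H1) (e2 : G -> H2)
         (I1 : H1 -> Prop) (I2 : H2 -> Prop),
    is_try P0 P1 P2 e1 e2 I1 I2 /\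
    exists f, hom_to_Gx P0 e1 e2 I1 I2 P1 P2 P3 f /\
      exists u, inUx P0 I1 I2 u /\ f a u <> u.
Proof. by case: NF => _ [_ [_ [_ [_ [_ [_ [_ [_ [_ [_ [_ [_ [_ h]]]]]]]]]]]]]; exact: h. Qed.

Lemma NF_finite3 : finiteP P3.
Proof.
case: NF_finite1 => s1 H1; case: NF_finite2 => s2 H2.
have [|t Ht] := @NF_lf3 (s1 ++ s2).
  move=> x; rewrite mem_cat => /orP [/H1|/H2]; [exact: NF_incl13 | exact: NF_incl23].
exists t => x; rewrite -Ht NF_gen3; split; apply: gen_mono => y.
  by case=> [/H1|/H2] h; rewrite mem_cat h ?orbT.
by rewrite mem_cat => /orP [/H1|/H2]; [left | right].
Qed.

End NFProjections.

Section HomToGx.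
Variables (G H1 H2 : groupType) (P0 P1 P2 P3 : G -> Prop) (e1 : G -> H1) (e2 : G -> H2)
  (I1 : H1 -> Prop) (I2 : H2 -> Prop) (f : G -> Ux G H1 H2 -> Ux G H1 H2).
Hypotheses (sP0 : is_subgroup P0) (he1 : is_emb P1 e1) (hI1 : coset_reps P0 e1 I1)
  (P0P1 : incl_set P0 P1) (sP3 : is_subgroup P3)
  (P1P3 : incl_set P1 P3) (P2P3 : incl_set P2 P3)
  (hf : hom_to_Gx P0 e1 e2 I1 I2 P1 P2 P3 f).

Local Notation U := (inUx P0 I1 I2).

Lemma hom_to_Gx1 u : U u -> f 1 u = u.
Proof.
move=> Uu; case: hf => _ [_ [hf1 _]]; have [P01 _] := sP0.
have he01 := is_emb_sub he1 P0P1.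
have := hf1 1 (P0P1 P01) u Uu; rewrite (hom1 sP0 (emb_hom he01)) => J.
exact: (j1rel_fun sP0 he01 hI1 J (j1rel1 e1 Uu)).
Qed.

Lemma hom_to_Gx_div a b u : P3 a -> P3 b -> U u -> f a u = f b u -> f (a * b^-1) u = u.
Proof.
move=> Pa Pb Uu Eab; have [_ [SM SV]] := sP3; have [_ [hM _]] := hf.
by rewrite hM ?Eab -?hM ?mulgV ?hom_to_Gx1 //; apply: SV.
Qed.

Lemma hom_to_Gx_letters l u : letters_in P1 P2 l -> U u ->
  genrel P0 e1 e2 I1 I2 (lmap e1 e2 l) u (f (lprod l) u).
Proof.
elim: l u => [|z l IH] u /=; first by move=> _ Uu; rewrite hom_to_Gx1.
move=> [Hz Hl] Uu; case: hf => _ [hM [hf1 hf2]].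
have P3z : P3 (lval z) by case: z Hz => x Hx /=; [apply: P1P3 | apply: P2P3].
rewrite hM //; last exact: lprod_in Hl.
exists (f (lval z) u); split; first by case: z Hz {P3z} => x Hx /=; [apply: hf1 | apply: hf2].
apply: IH => //; case: z Hz {P3z} => x Hx /=.
  exact: j1rel_inUx Uu (hf1 _ Hx _ Uu).
exact: gen_step_inUx (inr _) _ _ Uu (hf2 _ Hx _ Uu).
Qed.

End HomToGx.

Section WordActionIndependence.
Variables (G : groupType) (P0 P1 P2 P3 : G -> Prop).
Hypothesis NF : NF_fin P0 P1 P2 P3.
Variables (A1 A2 : G -> Prop) (H1 H2 : groupType) (phi1 : G -> H1) (phi2 : G -> H2)
  (I1 : H1 -> Prop) (I2 : H2 -> Prop).
Hypotheses (sA1 : is_subgroup A1) (sA2 : is_subgroup A2)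
  (P0A1 : incl_set P0 A1) (P0A2 : incl_set P0 A2)
  (A1P1 : incl_set A1 P1) (A2P2 : incl_set A2 P2)
  (hphi1 : is_emb A1 phi1) (hphi2 : is_emb A2 phi2)
  (hI1 : coset_reps P0 phi1 I1) (hI2 : coset_reps P0 phi2 I2).
Variable u0 : Ux G H1 H2.
Hypothesis Uu0 : inUx P0 I1 I2 u0.

Let sP0 := NF_sub0 NF.
Let sP3 := NF_sub3 NF.
Let A1P3 : incl_set A1 P3. Proof. by move=> x /A1P1 /(NF_incl13 NF). Qed.
Let A2P3 : incl_set A2 P3. Proof. by move=> x /A2P2 /(NF_incl23 NF). Qed.
Let P0P3 : incl_set P0 P3. Proof. by move=> x /P0A1 /A1P3. Qed.

Local Notation S := (subg sP3).
Local Notation pi := (insubg sP3).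

Let pi_emb : is_emb P3 pi. Proof. exact: insubg_emb. Qed.

Definition trial_reps (A : G -> Prop) (H : groupType) (phi : G -> H) (I : H -> Prop)
    (g : H) (x : G) : Prop :=
  (A x /\ I (g * phi x)) \/ [/\ P3 x, ~ A x & x = canon P0 x].

Let trial_reps_coset (A : G -> Prop) (H : groupType) (phi : G -> H) (I : H -> Prop) g :
  is_subgroup A -> incl_set P0 A -> incl_set A P3 -> is_emb A phi ->
  coset_reps P0 phi I -> I g -> coset_reps P0 pi (fun s => trial_reps A phi I g (val s)).
Proof.
move=> sA P0A AP3 hphi hI Ig; apply: coset_reps_subg => //.
apply: coset_reps_on_extend => //; last exact: coset_reps_on_translate.
by move=> a [].
Qed.

Let trial_I1 (s : S) := trial_reps A1 phi1 I1 u0.1.2 (val s).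
Let trial_I2 (s : S) := trial_reps A2 phi2 I2 u0.2 (val s).
Let trial_coset1 : coset_reps P0 pi trial_I1.
Proof. by case: Uu0 => _ [Ig1 _]; apply: trial_reps_coset. Qed.
Let trial_coset2 : coset_reps P0 pi trial_I2.
Proof. by case: Uu0 => _ [_ Ig2]; apply: trial_reps_coset. Qed.

Let trial : is_try P0 P1 P2 pi pi trial_I1 trial_I2.
Proof.
have lfS := subg_locally_finite (sP := sP3) (NF_finite3 NF).
split=> //; split=> //; split; first exact: insubg_emb (NF_incl13 NF).
by split; first exact: insubg_emb (NF_incl23 NF).
Qed.

Let pi_shift (A : G -> Prop) (H : groupType) (phi : G -> H) g a1 v0 a m0 m1 :
  is_subgroup A -> incl_set P0 A -> incl_set A P3 -> is_emb A phi ->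
  A a1 -> P0 v0 -> A a -> P0 m0 -> m1 * phi m0 = g * phi a1 * phi v0 * phi a ->
  let a1' := a1 * v0 * a * m0^-1 in
  [/\ A a1', m1 = g * phi a1' & pi a1' * pi m0 = pi a1 * pi v0 * pi a].
Proof.
move=> sA P0A AP3 hphi Aa1 Pv0 Aa Pm0 Em a1'; have [_ [AM AV]] := sA.
have Am0 := P0A _ Pm0; have Av0 := P0A _ Pv0; have Am0' : A m0^-1 by apply: AV.
have Aa1' : A a1' by do !apply: (AM).
have [pM _] := pi_emb; have [_ [SM _]] := sP3.
split=> //.
  rewrite /a1' !(emb_hom hphi) ?(homV sA (emb_hom hphi)) //; try by do !apply: (AM).
  by rewrite -[m1](mulgK (phi m0)) Em !mulgA.
by rewrite -!pM ?/a1' ?mulgVK //; do ?[apply: (SM)]; apply: AP3; do ?[apply: (AM)].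
Qed.

Section Tracking.
Variable f : G -> Ux G S S -> Ux G S S.
Hypothesis hf : hom_to_Gx P0 pi pi trial_I1 trial_I2 P1 P2 P3 f.

Definition tracks (v : Ux G H1 H2) (w : Ux G S S) : Prop :=
  [/\ w.1.1 = v.1.1,
      exists a1, [/\ A1 a1, v.1.2 = u0.1.2 * phi1 a1 & w.1.2 = pi a1]
    & exists a2, [/\ A2 a2, v.2 = u0.2 * phi2 a2 & w.2 = pi a2]].

Lemma tracks_inUx v w : inUx P0 I1 I2 v -> tracks v w -> inUx P0 trial_I1 trial_I2 w.
Proof.
case: v w => [[v0 v1] v2] [[w0 w1] w2] [Pv0 [Iv1 Iv2]].
case=> /= -> [a1 [Aa1 Ev1 ->]] [a2 [Aa2 Ev2 ->]]; split=> //.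
have P3a1 := A1P3 Aa1; have P3a2 := A2P3 Aa2.
by split; left; rewrite insubgK // -?Ev1 -?Ev2.
Qed.

Lemma tracks_fun v v' w : tracks v w -> tracks v' w -> v = v'.
Proof.
case: v v' => [[v0 v1] v2] [[v0' v1'] v2'].
case=> /= <- [a1 [Aa1 -> Ew1]] [a2 [Aa2 -> Ew2]].
case=> /= -> [b1 [Ab1 -> Ew1']] [b2 [Ab2 -> Ew2']].
have [_ pI] := pi_emb.
have -> : a1 = b1 by apply: pI; [exact: A1P3 | exact: A1P3 | rewrite -Ew1 -Ew1'].
have -> // : a2 = b2 by apply: pI; [exact: A2P3 | exact: A2P3 | rewrite -Ew2 -Ew2'].
Qed.

Lemma tracks_base : tracks u0 ((u0.1.1, 1), 1).
Proof.
have pi1 : pi 1 = 1 := hom1 sP3 (emb_hom pi_emb).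
split=> //; [exists 1 | exists 1]; rewrite ?(hom1 sA1 (emb_hom hphi1))
  ?(hom1 sA2 (emb_hom hphi2)) ?mulg1 //; by [case: sA1 | case: sA2].
Qed.

Lemma tracks_step1 a v w m : A1 a -> inUx P0 I1 I2 v -> tracks v w ->
  j1rel P0 phi1 I1 (phi1 a) v m -> tracks m (f a w).
Proof.
move=> Aa Uv Tw; have Uw := tracks_inUx Uv Tw; case: hf => _ [_ [hf1 _]].
case: v Uv Tw => [[v0 v1] v2] [/= Pv0 _] [/= Ew0 [a1 [Aa1 Ev1 Ew1]] Tw2].
case: m => [[m0 m1] m2] [/= -> [Pm0 [Im1 Em]]]; rewrite Ev1 in Em.
have [Aa1' Em1 Epi] := pi_shift sA1 P0A1 A1P3 hphi1 Aa1 Pv0 Aa Pm0 Em.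
have Jc : j1rel P0 pi trial_I1 (pi a) w ((m0, pi (a1 * v0 * a * m0^-1)), w.2).
  split=> //; split=> //; split; first by left; rewrite insubgK -?Em1 //; exact: A1P3.
  by rewrite /= Epi Ew1 Ew0.
rewrite (j1rel_fun sP0 (is_emb_sub pi_emb P0P3) trial_coset1 (hf1 _ (A1P1 Aa) _ Uw) Jc).
by split=> //; exists (a1 * v0 * a * m0^-1).
Qed.

Lemma tracks_step2 a v w m : A2 a -> inUx P0 I1 I2 v -> tracks v w ->
  j2rel P0 phi2 I2 (phi2 a) v m -> tracks m (f a w).
Proof.
move=> Aa Uv Tw; have Uw := tracks_inUx Uv Tw; case: hf => _ [_ [_ hf2]].
case: v Uv Tw => [[v0 v1] v2] [/= Pv0 _] [/= Ew0 Tw1 [a2 [Aa2 Ev2 Ew2]]].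
case: m => [[m0 m1] m2] [/= -> [Pm0 [Im2 Em]]]; rewrite Ev2 in Em.
have [Aa2' Em2 Epi] := pi_shift sA2 P0A2 A2P3 hphi2 Aa2 Pv0 Aa Pm0 Em.
have Jc : j2rel P0 pi trial_I2 (pi a) w ((m0, w.1.2), pi (a2 * v0 * a * m0^-1)).
  split=> //; split=> //; split; first by left; rewrite insubgK -?Em2 //; exact: A2P3.
  by rewrite /= Epi Ew2 Ew0.
rewrite (gen_step_fun sP0 (is_emb_sub pi_emb P0P3) (is_emb_sub pi_emb P0P3) trial_coset1 trial_coset2
  (w := inr (pi a)) (hf2 _ (A2P2 Aa) _ Uw) Jc).
by split=> //; exists (a2 * v0 * a * m0^-1).
Qed.

Lemma tracks_letters k v v' w : letters_in A1 A2 k -> inUx P0 I1 I2 v -> tracks v w ->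
  genrel P0 phi1 phi2 I1 I2 (lmap phi1 phi2 k) v v' -> tracks v' (f (lprod k) w).
Proof.
elim: k v w => [|z k IH] v w /=.
  move=> _ Uv Tw ->; rewrite (hom_to_Gx1 sP0 (insubg_emb sP3 (NF_incl13 NF)) trial_coset1
    (NF_incl01 NF) hf) //; exact: tracks_inUx Tw.
move=> [Hz Hk] Uv Tw [m [Hm Hr]]; have [_ [hM _]] := hf.
have [Um Tm] : inUx P0 I1 I2 m /\ tracks m (f (lval z) w).
  case: z Hz Hm => x Hx /= Hm; split.
  - exact: j1rel_inUx Uv Hm.
  - exact: (tracks_step1 Hx Uv Tw Hm).
  - exact: (gen_step_inUx (w := inr (phi2 x)) Uv Hm).
  - exact: (tracks_step2 Hx Uv Tw Hm).
have P3z : P3 (lval z) by case: z Hz {Hm Tm} => x Hx; [exact: A1P3 | exact: A2P3].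
have P3k : P3 (lprod k) by exact: lprod_in sP3 A1P3 A2P3 Hk.
by rewrite hM //; [exact: IH Hk Um Tm Hr | exact: tracks_inUx Tw].
Qed.

End Tracking.

Theorem genrel_letters_eq l l' v v' :
  letters_in A1 A2 l -> letters_in A1 A2 l' -> lprod l = lprod l' ->
  genrel P0 phi1 phi2 I1 I2 (lmap phi1 phi2 l) u0 v ->
  genrel P0 phi1 phi2 I1 I2 (lmap phi1 phi2 l') u0 v' -> v = v'.
Proof.
move=> Hl Hl' El Hv Hv'; have [f hf] := NF_hom NF trial.
have T := tracks_letters hf _ Uu0 tracks_base.
by apply: tracks_fun (T _ _ Hl Hv) _; rewrite El; exact: T.
Qed.

End WordActionIndependence.

Section SubTryHom.
Variables (G : groupType) (P0 P1 P2 P3 : G -> Prop).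
Hypothesis NF : NF_fin P0 P1 P2 P3.
Variables (A1 A2 : G -> Prop) (H1 H2 : groupType) (phi1 : G -> H1) (phi2 : G -> H2)
  (I1 : H1 -> Prop) (I2 : H2 -> Prop).
Hypotheses (sA1 : is_subgroup A1) (sA2 : is_subgroup A2)
  (P0A1 : incl_set P0 A1) (P0A2 : incl_set P0 A2)
  (A1P1 : incl_set A1 P1) (A2P2 : incl_set A2 P2)
  (hphi1 : is_emb A1 phi1) (hphi2 : is_emb A2 phi2)
  (hI1 : coset_reps P0 phi1 I1) (hI2 : coset_reps P0 phi2 I2).

Local Notation A3 := (gen (unionP A1 A2)).
Local Notation GR := (genrel P0 phi1 phi2 I1 I2).

Definition word_action (a : G) (u : Ux G H1 H2) : Ux G H1 H2 :=
  epsilon (inhabits u) (GR (lmap phi1 phi2 (spelling A1 A2 a)) u).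

Lemma word_actionP a u : GR (lmap phi1 phi2 (spelling A1 A2 a)) u (word_action a u).
Proof. by apply: epsilon_spec; apply: genrel_total. Qed.

Lemma word_actionE a l u v : letters_in A1 A2 l -> lprod l = a -> inUx P0 I1 I2 u ->
  GR (lmap phi1 phi2 l) u v -> word_action a u = v.
Proof.
move=> Hl <- Uu Hv; have [Hs Es] := spellingP sA1 sA2 (letters_in_gen Hl).
exact: (genrel_letters_eq NF sA1 sA2 P0A1 P0A2 A1P1 A2P2 hphi1 hphi2 hI1 hI2 Uu Hs Hl Es
  (word_actionP _ u) Hv).
Qed.

Lemma word_action_hom : hom_to_Gx P0 phi1 phi2 I1 I2 A1 A2 A3 word_action.
Proof.
split; [|split; [|split]].
- by move=> a _; exists (lmap phi1 phi2 (spelling A1 A2 a)) => u _; apply: word_actionP.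
- move=> a b Aa Ab u Uu.
  have [Ha Ea] := spellingP sA1 sA2 Aa; have [Hb Eb] := spellingP sA1 sA2 Ab.
  apply: (word_actionE (l := spelling A1 A2 a ++ spelling A1 A2 b)) => //.
  + exact: letters_in_cat.
  + by rewrite lprod_cat Ea Eb.
  + rewrite /lmap map_cat; apply: genrel_cat; exact: word_actionP.
- move=> g Ag u Uu; have [v Jv] := j1rel_total hI1 (phi1 g) u (H2 := H2).
  by rewrite (word_actionE (l := [:: inl g]) _ _ Uu (v := v)) //= ?mulg1 //; exists v.
- move=> g Ag u Uu; have [v Jv] := gen_step_total hI1 hI2 (inr (phi2 g)) u.
  by rewrite (word_actionE (l := [:: inr g]) _ _ Uu (v := v)) //= ?mulg1 //; exists v.
Qed.

End SubTryHom.

Lemma locally_finite_sub (G : groupType) (P Q : G -> Prop) :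
  locally_finite P -> incl_set Q P -> locally_finite Q.
Proof. by move=> lf QP s Hs; apply: lf => x /Hs /QP. Qed.

Section Restriction.
Variables (G H1 H2 : groupType) (P0 P1 P2 P3 Q1 Q2 Q3 : G -> Prop)
  (e1 : G -> H1) (e2 : G -> H2) (I1 : H1 -> Prop) (I2 : H2 -> Prop).
Hypotheses (Q1P1 : incl_set Q1 P1) (Q2P2 : incl_set Q2 P2) (Q3P3 : incl_set Q3 P3).

Lemma is_try_sub : is_try P0 P1 P2 e1 e2 I1 I2 -> is_try P0 Q1 Q2 e1 e2 I1 I2.
Proof.
case=> lf1 [lf2 [he1 [he2 hI]]].
do 2!split=> //; split; first exact: is_emb_sub he1 Q1P1.
by split; first exact: is_emb_sub he2 Q2P2.
Qed.

Lemma hom_to_Gx_sub f : hom_to_Gx P0 e1 e2 I1 I2 P1 P2 P3 f ->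
  hom_to_Gx P0 e1 e2 I1 I2 Q1 Q2 Q3 f.
Proof.
case=> h1 [h2 [h3 h4]]; split; first by move=> a /Q3P3; apply: h1.
split; first by move=> a b /Q3P3 Pa /Q3P3 Pb; apply: h2.
by split=> g Qg; [apply/h3/Q1P1 | apply/h4/Q2P2].
Qed.

End Restriction.

Lemma NF_fin_sub (G : groupType) (P0 P1 P2 P3 Q1 Q2 : G -> Prop) :
  NF_fin P0 P1 P2 P3 -> is_subgroup Q1 -> is_subgroup Q2 ->
  incl_set P0 Q1 -> incl_set Q1 P1 -> incl_set P0 Q2 -> incl_set Q2 P2 ->
  NF_fin P0 Q1 Q2 (gen (unionP Q1 Q2)).
Proof.
move=> NF sQ1 sQ2 P0Q1 Q1P1 P0Q2 Q2P2.
have genP3 : incl_set (gen (unionP Q1 Q2)) P3.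
  by apply: gen_subset (NF_sub3 NF) _ => x [/Q1P1 /(NF_incl13 NF)|/Q2P2 /(NF_incl23 NF)].
split; first by case: NF.
split; first exact: finiteP_sub (NF_finite1 NF) Q1P1.
split; first exact: finiteP_sub (NF_finite2 NF) Q2P2.
split; first exact: NF_sub0 NF.
split=> //; split=> //; split; first exact: gen_subgroup.
split; first exact: locally_finite_sub (NF_lf3 NF) genP3.
split=> //; split=> //; split; first by move=> x Qx; apply: gen_in; left.
split; first by move=> x Qx; apply: gen_in; right.
split=> //; split.
  move=> H1 H2 e1 e2 I1 I2 [_ [_ [he1 [he2 [hI1 hI2]]]]].
  by eexists; exact: (word_action_hom NF sQ1 sQ2 P0Q1 P0Q2 Q1P1 Q2P2 he1 he2 hI1 hI2).
move=> a Qa na; have [H1 [H2 [e1 [e2 [I1 [I2 [ty [f [hf sep]]]]]]]]] :=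
  NF_sep NF (genP3 _ Qa) na.
exists H1, H2, e1, e2, I1, I2; split; first exact: is_try_sub ty.
by exists f; split=> //; apply: hom_to_Gx_sub hf.
Qed.

Theorem NF_rfin_sub (G : groupType) (P0 P1 P2 P3 Q1 Q2 Q3 : G -> Prop) :
  NF_fin P0 P1 P2 P3 ->
  is_subgroup Q1 -> is_subgroup Q2 -> is_subgroup Q3 ->
  incl_set P0 Q1 -> incl_set Q1 P1 -> incl_set P0 Q2 -> incl_set Q2 P2 ->
  incl_set (unionP Q1 Q2) Q3 -> incl_set Q3 P3 -> NF_rfin P0 Q1 Q2 Q3.
Proof.
move=> NF sQ1 sQ2 sQ3 P0Q1 Q1P1 P0Q2 Q2P2 Q12Q3 Q3P3.
split=> //; split; first exact: locally_finite_sub (NF_lf3 NF) Q3P3.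
split=> //; split=> //; split; first by move=> x Qx; apply: Q12Q3; left.
split; first by move=> x Qx; apply: Q12Q3; right.
exact: NF_fin_sub NF sQ1 sQ2 P0Q1 Q1P1 P0Q2 Q2P2.
Qed.

Definition swap_letter (H1 H2 : Type) (w : H1 + H2) : H2 + H1 :=
  match w with inl h => inr h | inr h => inl h end.

Section Swap.
Variables (G H1 H2 : groupType) (P0 P1 P2 P3 : G -> Prop) (e1 : G -> H1) (e2 : G -> H2)
  (I1 : H1 -> Prop) (I2 : H2 -> Prop).

Lemma genrel_swap ws u v : genrel P0 e1 e2 I1 I2 ws u v ->
  genrel P0 e2 e1 I2 I1 (map (@swap_letter _ _) ws) (swapU u) (swapU v).
Proof.
elim: ws u => [|w ws IH] u /=; first by move=> ->.
by move=> [m [Hm Hr]]; exists (swapU m); split; [case: w Hm | exact: IH].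
Qed.

Lemma is_try_swap : is_try P0 P1 P2 e1 e2 I1 I2 -> is_try P0 P2 P1 e2 e1 I2 I1.
Proof. by case=> [lf1 [lf2 [he1 [he2 [hI1 hI2]]]]]. Qed.

Lemma hom_to_Gx_swap f : hom_to_Gx P0 e1 e2 I1 I2 P1 P2 P3 f ->
  hom_to_Gx P0 e2 e1 I2 I1 P2 P1 P3 (fun a u => swapU (f a (swapU u))).
Proof.
case=> [h1 [h2 [h3 h4]]]; split; [|split; [|split]].
- move=> a Pa; case: (h1 a Pa) => ws Hws; exists (map (@swap_letter _ _) ws) => u Uu.
  by rewrite -{1}(swapUK u); apply/genrel_swap/Hws/inUx_swap.
- by move=> a b Pa Pb u /inUx_swap Uu; rewrite swapUK h2.
- by move=> g Pg u /inUx_swap Uu; have := h4 g Pg _ Uu; rewrite j2relE swapUK.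
- by move=> g Pg u /inUx_swap Uu; rewrite j2relE swapUK; apply: h3.
Qed.

End Swap.

Theorem NF_fin_sym (G : groupType) (P0 P1 P2 P3 : G -> Prop) :
  NF_fin P0 P1 P2 P3 -> NF_fin P0 P2 P1 P3.
Proof.
case=> f0 [f1 [f2 [s0 [s1 [s2 [s3 [lf [i01 [i02 [i13 [i23 [gb [homs sep]]]]]]]]]]]]].
do 12!split=> //; split.
  by move=> x; rewrite gb; split; apply: gen_mono => y [] ?; by [left | right].
split.
  move=> H1 H2 e1 e2 I1 I2 /is_try_swap /homs [f hf].
  by eexists; apply: hom_to_Gx_swap hf.
move=> a Pa na; have [H1 [H2 [e1 [e2 [I1 [I2 [ty [f [hf [u [Uu Hu]]]]]]]]]]] := sep a Pa na.
exists H2, H1, e2, e1, I2, I1; split; first exact: is_try_swap.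
eexists; split; first exact: hom_to_Gx_swap hf.
exists (swapU u); split; first exact: inUx_swap.
by rewrite swapUK => /(congr1 swapU); rewrite !swapUK.
Qed.

Lemma genrel_transport (G G' H1 H2 : groupType) (P0 : G -> Prop) (Q0 : G' -> Prop)
    (f0 : G' -> G) (e1 : G -> H1) (e2 : G -> H2) (phi1 : G' -> H1) (phi2 : G' -> H2)
    (I1 : H1 -> Prop) (I2 : H2 -> Prop) ws (w w' : Ux G' H1 H2) :
  (forall x, Q0 x -> P0 (f0 x)) ->
  (forall x, Q0 x -> phi1 x = e1 (f0 x)) -> (forall x, Q0 x -> phi2 x = e2 (f0 x)) ->
  inUx Q0 I1 I2 w -> genrel Q0 phi1 phi2 I1 I2 ws w w' ->
  genrel P0 e1 e2 I1 I2 ws ((f0 w.1.1, w.1.2), w.2) ((f0 w'.1.1, w'.1.2), w'.2).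
Proof.
move=> f0P Ephi1 Ephi2; elim: ws w => [|z ws IH] w /=; first by move=> _ ->.
move=> Uw [k [Hk Hr]]; exists ((f0 k.1.1, k.1.2), k.2); split; last first.
  by apply: IH Hr; case: z Hk => g Hk;
    [exact: j1rel_inUx Uw Hk | exact: (gen_step_inUx (w := inr g) Uw Hk)].
move: Hk; case: w Uw {Hr} => [[a b] c] [/= Qa _]; case: k => [[a' b'] c'].
case: z => g [/= -> [Qa' [Ib' E]]]; (split=> //; split; first exact: f0P); split=> //=.
- by rewrite -!Ephi1.
- by rewrite -!Ephi2.
Qed.

Section Extension.
Variables (G G' : groupType) (P0 P1 P2 P3 : G -> Prop) (Q0 Q1 Q2 Q3 : G' -> Prop).
Hypotheses (NFP : NF_fin P0 P1 P2 P3) (NFQ : NF_fin Q0 Q1 Q2 Q3).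
Variables (A1 A2 : G' -> Prop) (f0 f1 f2 : G' -> G).
Hypotheses (sA1 : is_subgroup A1) (sA2 : is_subgroup A2)
  (Q0A1 : incl_set Q0 A1) (Q0A2 : incl_set Q0 A2)
  (A1Q1 : incl_set A1 Q1) (A2Q2 : incl_set A2 Q2)
  (hf0 : is_iso_onto Q0 P0 f0) (hf1 : is_emb A1 f1) (hf2 : is_emb A2 f2)
  (f1P1 : forall x, A1 x -> P1 (f1 x)) (f2P2 : forall x, A2 x -> P2 (f2 x))
  (Ef1 : forall x, Q0 x -> f1 x = f0 x) (Ef2 : forall x, Q0 x -> f2 x = f0 x).

Let sP3 := NF_sub3 NFP.
Let P1P3 := NF_incl13 NFP.
Let P2P3 := NF_incl23 NFP.

Lemma hom_to_Gx_lmap_eq (H1 H2 : groupType) (e1 : G -> H1) (e2 : G -> H2)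
    (I1 : H1 -> Prop) (I2 : H2 -> Prop) f u l l' :
  is_try P0 P1 P2 e1 e2 I1 I2 -> hom_to_Gx P0 e1 e2 I1 I2 P1 P2 P3 f ->
  inUx P0 I1 I2 u -> letters_in A1 A2 l -> letters_in A1 A2 l' -> lprod l = lprod l' ->
  f (lprod (lmap f1 f2 l)) u = f (lprod (lmap f1 f2 l')) u.
Proof.
move=> [_ [_ [he1 [he2 [hI1 hI2]]]]] hf Uu Hl Hl' Ell'.
have sP0 := NF_sub0 NFP; have P0P1 := NF_incl01 NFP.
have he01 := is_emb_sub he1 P0P1; have he02 := is_emb_sub he2 (NF_incl02 NFP).
have [_ [f0P f0S]] := hf0.
have Ephi1 x : Q0 x -> (e1 \o f1) x = e1 (f0 x) by move=> /Ef1 /= ->.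
have Ephi2 x : Q0 x -> (e2 \o f2) x = e2 (f0 x) by move=> /Ef2 /= ->.
have hJ1 := coset_reps_comp hf0 Ephi1 hI1; have hJ2 := coset_reps_comp hf0 Ephi2 hI2.
have [x0 [Qx0 Ex0]] := f0S _ (proj1 Uu).
have Uu' : inUx Q0 I1 I2 ((x0, u.1.2), u.2) by case: Uu.
have [v Hv] := genrel_total hJ1 hJ2 (lmap (e1 \o f1) (e2 \o f2) l) ((x0, u.1.2), u.2).
have [v' Hv'] := genrel_total hJ1 hJ2 (lmap (e1 \o f1) (e2 \o f2) l') ((x0, u.1.2), u.2).
have Evv := genrel_letters_eq NFQ sA1 sA2 Q0A1 Q0A2 A1Q1 A2Q2
  (is_emb_comp hf1 f1P1 he1) (is_emb_comp hf2 f2P2 he2) hJ1 hJ2 Uu' Hl Hl' Ell' Hv Hv'.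
subst v'; rewrite -lmap_comp in Hv; rewrite -lmap_comp in Hv'.
have T := genrel_transport (P0 := P0) f0P Ephi1 Ephi2 Uu'.
have u_eq : ((f0 x0, u.1.2), u.2) = u by rewrite Ex0 -!surjective_pairing.
move: (T _ _ Hv) (T _ _ Hv'); rewrite u_eq => Tv Tv'.
have act := hom_to_Gx_letters sP0 he1 hI1 P0P1 sP3 P1P3 P2P3 hf _ Uu.
rewrite (genrel_fun sP0 he01 he02 hI1 hI2 (act _ (letters_in_lmap f1P1 f2P2 Hl)) Tv).
by rewrite (genrel_fun sP0 he01 he02 hI1 hI2 (act _ (letters_in_lmap f1P1 f2P2 Hl')) Tv').
Qed.

(* If the two spellings gave different elements, a try separating their
   quotient from 1 would, pulled back along [f0], let two words with the same
   product in [Q3] act differently. *)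
Theorem lprod_lmap_eq l l' : letters_in A1 A2 l -> letters_in A1 A2 l' ->
  lprod l = lprod l' -> lprod (lmap f1 f2 l) = lprod (lmap f1 f2 l').
Proof.
move=> Hl Hl' Ell'; set m := lprod _; set m' := lprod _.
have Pm : P3 m by exact: lprod_in sP3 P1P3 P2P3 (letters_in_lmap f1P1 f2P2 Hl).
have Pm' : P3 m' by exact: lprod_in sP3 P1P3 P2P3 (letters_in_lmap f1P1 f2P2 Hl').
apply: NNPP => ne.
have Pc : P3 (m * m'^-1) by case: sP3 => _ [SM SV]; apply/SM/SV.
have nc : m * m'^-1 <> 1 by move/divg1_eq.
have [H1 [H2 [e1 [e2 [I1 [I2 [ty [f [hf [u [Uu []]]]]]]]]]]] := NF_sep NFP Pc nc.
have [_ [_ [he1 _]]] := ty.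
apply: (hom_to_Gx_div (NF_sub0 NFP) he1 _ (NF_incl01 NFP) sP3 hf Pm Pm' Uu).
  by case: ty => _ [_ [_ [_ []]]].
exact: hom_to_Gx_lmap_eq ty hf Uu Hl Hl' Ell'.
Qed.

Local Notation A3 := (gen (unionP A1 A2)).

Definition ext_map (a : G') : G := lprod (lmap f1 f2 (spelling A1 A2 a)).

Lemma ext_map_letters l : letters_in A1 A2 l -> ext_map (lprod l) = lprod (lmap f1 f2 l).
Proof.
move=> Hl; have [Hs Es] := spellingP sA1 sA2 (letters_in_gen Hl).
exact: lprod_lmap_eq Hs Hl Es.
Qed.

Lemma ext_map_hom : is_hom_on A3 ext_map.
Proof.
move=> a b Aa Ab; have [Ha Ea] := spellingP sA1 sA2 Aa; have [Hb Eb] := spellingP sA1 sA2 Ab.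
rewrite -{1}Ea -{1}Eb -lprod_cat ext_map_letters; last exact: letters_in_cat.
by rewrite /lmap map_cat lprod_cat.
Qed.

Lemma ext_map1 x : A1 x -> ext_map x = f1 x.
Proof. by move=> Ax; rewrite -[x]mulg1 (ext_map_letters (l := [:: inl x])) //= !mulg1. Qed.

Lemma ext_map2 x : A2 x -> ext_map x = f2 x.
Proof. by move=> Ax; rewrite -[x]mulg1 (ext_map_letters (l := [:: inr x])) //= !mulg1. Qed.

Lemma ext_mapP a : A3 a -> P3 (ext_map a).
Proof.
move=> Aa; have [Ha _] := spellingP sA1 sA2 Aa.
exact: lprod_in sP3 P1P3 P2P3 (letters_in_lmap f1P1 f2P2 Ha).
Qed.

Theorem NF_extension : exists F : G' -> G,
  [/\ is_hom_on A3 F, forall a, A3 a -> P3 (F a),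
      forall x, A1 x -> F x = f1 x & forall x, A2 x -> F x = f2 x].
Proof.
by exists ext_map; split;
  [exact: ext_map_hom | exact: ext_mapP | exact: ext_map1 | exact: ext_map2].
Qed.

End Extension.

Section InverseIso.
Variables (G' G : groupType) (Q : G' -> Prop) (P : G -> Prop) (f : G' -> G).
Hypothesis hf : is_iso_onto Q P f.

Definition iso_inv (y : G) : G' := epsilon (inhabits 1) (fun x => Q x /\ f x = y).

Lemma iso_invP y : P y -> Q (iso_inv y) /\ f (iso_inv y) = y.
Proof.
move=> Py; apply: (epsilon_spec _ (fun x => Q x /\ f x = y)).
by case: hf => _ [_ fS]; apply: fS.
Qed.

Lemma iso_invK x : Q x -> iso_inv (f x) = x.
Proof.
move=> Qx; have [[_ fI] [fP _]] := hf; have [Qg Eg] := iso_invP (fP _ Qx).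
exact: fI.
Qed.

Lemma iso_inv_iso : is_subgroup Q -> is_iso_onto P Q iso_inv.
Proof.
move=> [_ [QM _]]; have [[fM _] [fP _]] := hf.
split; [split|split].
- move=> a b Pa Pb; have [Qa Ea] := iso_invP Pa; have [Qb Eb] := iso_invP Pb.
  by rewrite -{1}Ea -{1}Eb -fM // iso_invK //; apply: QM.
- move=> a b Pa Pb E; have [_ Ea] := iso_invP Pa; have [_ Eb] := iso_invP Pb.
  by rewrite -Ea -Eb E.
- by move=> y Py; case: (iso_invP Py).
- by move=> x Qx; exists (f x); split; [apply: fP | apply: iso_invK].
Qed.

End InverseIso.

Lemma iso_inv_restr (G' G : groupType) (Q0 Q : G' -> Prop) (P0 P : G -> Prop)
    (f0 f : G' -> G) :
  is_iso_onto Q0 P0 f0 -> is_iso_onto Q P f -> incl_set Q0 Q ->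
  (forall x, Q0 x -> f x = f0 x) -> forall y, P0 y -> iso_inv Q f y = iso_inv Q0 f0 y.
Proof.
move=> hf0 hf Q0Q Ef y Py; have [Qx Ex] := iso_invP hf0 Py.
by rewrite -{1}Ex -Ef // (iso_invK hf) //; apply: Q0Q.
Qed.

Theorem NF_fin_iso_extend (G G' : groupType) (P0 P1 P2 P3 : G -> Prop)
    (Q0 Q1 Q2 Q3 : G' -> Prop) (f0 f1 f2 : G' -> G) :
  NF_fin P0 P1 P2 P3 -> NF_fin Q0 Q1 Q2 Q3 ->
  is_iso_onto Q0 P0 f0 -> is_iso_onto Q1 P1 f1 -> is_iso_onto Q2 P2 f2 ->
  (forall x, Q0 x -> f1 x = f0 x) -> (forall x, Q0 x -> f2 x = f0 x) ->
  exists f3 : G' -> G,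
    is_emb Q3 f3 /\ (forall x, Q3 x -> P3 (f3 x)) /\
    (forall x, Q1 x -> f3 x = f1 x) /\ (forall x, Q2 x -> f3 x = f2 x).
Proof.
move=> NFP NFQ hf0 hf1 hf2 Ef1 Ef2.
have sQ0 := NF_sub0 NFQ; have sQ1 := NF_sub1 NFQ; have sQ2 := NF_sub2 NFQ.
have [_ [f1P _]] := hf1; have [_ [f2P _]] := hf2.
have [F [homF FP FE1 FE2]] := NF_extension NFP NFQ sQ1 sQ2 (NF_incl01 NFQ) (NF_incl02 NFQ)
  (fun x h => h) (fun x h => h) hf0 hf1.1 hf2.1 f1P f2P Ef1 Ef2.
have hg1 := iso_inv_iso hf1 sQ1; have hg2 := iso_inv_iso hf2 sQ2.
have [_ [g1P _]] := hg1; have [_ [g2P _]] := hg2.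
have [F' [homF' _ FE1' FE2']] := NF_extension NFQ NFP (NF_sub1 NFP) (NF_sub2 NFP)
  (NF_incl01 NFP) (NF_incl02 NFP) (fun x h => h) (fun x h => h) (iso_inv_iso hf0 sQ0)
  hg1.1 hg2.1 g1P g2P (iso_inv_restr hf0 hf1 (NF_incl01 NFQ) Ef1)
  (iso_inv_restr hf0 hf2 (NF_incl02 NFQ) Ef2).
have Q3E : forall x, Q3 x <-> gen (unionP Q1 Q2) x := NF_gen3 NFQ.
have P3E : forall y, P3 y <-> gen (unionP P1 P2) y := NF_gen3 NFP.
have F'FK x : Q3 x -> F' (F x) = x.
  move/Q3E; apply: (gen_hom_eq (f := fun x => F' (F x)) (f' := id)) => //.
  - by move=> a b Qa Qb /=; rewrite homF // homF' //; apply/P3E/FP.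
  - move=> a [Qa|Qa] /=.
    + by rewrite FE1 // FE1' ?(iso_invK hf1) //; exact: hf1.2.1.
    + by rewrite FE2 // FE2' ?(iso_invK hf2) //; exact: hf2.2.1.
exists F; split; [split | split=> // x /Q3E; exact: FP].
- by move=> x y /Q3E Qx /Q3E Qy; apply: homF.
- by move=> x y Qx Qy E; rewrite -(F'FK x Qx) -(F'FK y Qy) E.
Qed.

Section Words.
Variable G : groupType.

Definition ev (s : seq G) (w : word) : G := weval (fun i => nth 1 s i) w.

Fixpoint clean (n : nat) (w : word) : word :=
  match w with
  | WVar i => if (i < n)%N then WVar i else WOne
  | WOne => WOne
  | WMul w1 w2 => WMul (clean n w1) (clean n w2)
  | WInv w1 => WInv (clean n w1)
  end.

Fixpoint shift (n k : nat) (w : word) : word :=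
  match w with
  | WVar i => WVar (if (i < n)%N then i else (i + k)%N)
  | WOne => WOne
  | WMul w1 w2 => WMul (shift n k w1) (shift n k w2)
  | WInv w1 => WInv (shift n k w1)
  end.

Lemma scoped_clean n w : scoped n (clean n w).
Proof. by elim: w => //= [i|w1 -> w2 ->] //; case: ifP. Qed.

Lemma ev_clean s s' w : ev (s ++ s') (clean (size s) w) = ev s w.
Proof.
rewrite /ev; elim: w => //= [i|w1 -> w2 ->|w1 ->] //.
case: ifP => /= h; first by rewrite nth_cat h.
by rewrite nth_default // leqNgt h.
Qed.

Lemma ev_shift (b cs cs' : seq G) w :
  ev (b ++ cs ++ cs') (shift (size b) (size cs) w) = ev (b ++ cs') w.
Proof.
rewrite /ev; elim: w => //= [i|w1 -> w2 ->|w1 ->] //.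
case: ifP => h; first by rewrite !nth_cat h.
rewrite !nth_cat h; have -> : (i + size cs < size b)%N = false by lia.
have -> : (i + size cs - size b < size cs)%N = false by lia.
by congr nth; lia.
Qed.

Lemma ev_in (S : G -> Prop) s w : is_subgroup S -> (forall z, z \in s -> S z) -> S (ev s w).
Proof.
move=> [S1 [SM SV]] Hs; rewrite /ev; elim: w => //= [i|w1 h1 w2 h2|w1 h1]; auto.
by case: (ltnP i (size s)) => h; [apply/Hs/mem_nth | rewrite nth_default].
Qed.

End Words.

Lemma hom_ev (G H : groupType) (S : G -> Prop) (F : G -> H) s w :
  is_subgroup S -> is_hom_on S F -> (forall z, z \in s -> S z) ->
  F (ev s w) = ev (map F s) w.
Proof.
move=> sS hF Hs; rewrite /ev; elim: w => /= [i|| w1 <- w2 <- | w1 <-].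
- case: (ltnP i (size s)) => h; first by rewrite (nth_map 1).
  by rewrite !nth_default ?size_map // (hom1 sS hF).
- exact: hom1 sS hF.
- by rewrite hF //; exact: ev_in.
- by rewrite (homV sS hF) //; exact: ev_in.
Qed.

Lemma same_tp_sym (G : groupType) (b b' : seq G) (P0 : G -> Prop) :
  same_tp b b' P0 -> same_tp b' b P0.
Proof. by move=> h phi; split; move/h. Qed.

Section TypeRelation.
Variables (G : groupType) (P0 : G -> Prop) (b b' : seq G).
Hypotheses (sz : size b = size b') (stp : same_tp b b' P0).

(* The graph of the partial isomorphism [b |-> b'] over [P0]. *)
Definition tp_rel (x y : G) : Prop :=
  exists w cs, [/\ forall c, c \in cs -> P0 c, x = ev (b ++ cs) w & y = ev (b' ++ cs) w].

Lemma same_tp_ev1 cs w : (forall c, c \in cs -> P0 c) ->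
  ev (b ++ cs) w = 1 -> ev (b' ++ cs) w = 1.
Proof.
move=> Hcs E; set n := (size b + size cs)%N.
have e1 := @ev_clean _ (b ++ cs) [::] w; rewrite cats0 size_cat in e1.
have e2 := @ev_clean _ (b' ++ cs) [::] w; rewrite cats0 size_cat -sz in e2.
have Hphi : tp_bs b P0 (clean n w, cs, true).
  split; first exact: scoped_clean.
  by split=> //; rewrite -/(ev (b ++ cs) (clean n w)) e1.
have [_ [_]] := (stp _).1 Hphi.
by rewrite -/(ev (b' ++ cs) (clean n w)) e2.
Qed.

Lemma tp_rel2 x y x' y' : tp_rel x y -> tp_rel x' y' -> exists cs w1 w2,
  [/\ forall c, c \in cs -> P0 c, x = ev (b ++ cs) w1, y = ev (b' ++ cs) w1,
      x' = ev (b ++ cs) w2 & y' = ev (b' ++ cs) w2].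
Proof.
move=> [w [cs [Hc -> ->]]] [w' [cs' [Hc' -> ->]]].
exists (cs ++ cs'), (clean (size b + size cs) w), (shift (size b) (size cs) w').
split; first by move=> c; rewrite mem_cat => /orP [/Hc|/Hc'].
- by rewrite catA -size_cat ev_clean.
- by rewrite catA sz -size_cat ev_clean.
- by rewrite ev_shift.
- by rewrite sz ev_shift.
Qed.

Lemma tp_rel_fun x y y' : tp_rel x y -> tp_rel x y' -> y = y'.
Proof.
move=> h h'; have [cs [w1 [w2 [Hc E1 E2 E3 E4]]]] := tp_rel2 h h'.
have := @same_tp_ev1 cs (WMul w1 (WInv w2)) Hc.
rewrite /ev /= -/(ev _ w1) -/(ev _ w2) -/(ev _ w1) -/(ev _ w2).
by rewrite -E1 -E2 -E3 -E4 mulgV => /(_ erefl) /divg1_eq.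
Qed.

Lemma tp_rel_mul x y x' y' : tp_rel x y -> tp_rel x' y' -> tp_rel (x * x') (y * y').
Proof.
move=> h h'; have [cs [w1 [w2 [Hc E1 E2 E3 E4]]]] := tp_rel2 h h'.
by exists (WMul w1 w2), cs; rewrite E1 E2 E3 E4.
Qed.

Lemma tp_rel_inv x y : tp_rel x y -> tp_rel x^-1 y^-1.
Proof. by move=> [w [cs [Hc -> ->]]]; exists (WInv w), cs. Qed.

Lemma tp_rel_P0 c : P0 c -> tp_rel c c.
Proof.
move=> Pc; exists (WVar (size b)), [:: c]; split; first by move=> z /[!inE] /eqP ->.
  by rewrite /ev /= nth_cat ltnn subnn.
by rewrite /ev /= nth_cat sz ltnn subnn.
Qed.

Lemma tp_rel_nth i : (i < size b)%N -> tp_rel (nth 1 b i) (nth 1 b' i).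
Proof. by move=> h; exists (WVar i), [::]; rewrite /ev /= !cats0. Qed.

End TypeRelation.

Lemma tp_rel_sym (G : groupType) (P0 : G -> Prop) b b' x y :
  tp_rel P0 b b' x y -> tp_rel P0 b' b y x.
Proof. by move=> [w [cs [Hc -> ->]]]; exists w, cs. Qed.

Lemma is_emb_id (G : groupType) (P : G -> Prop) : is_emb P id.
Proof. by []. Qed.

Lemma is_iso_onto_id (G : groupType) (P : G -> Prop) : is_iso_onto P P id.
Proof. by split=> //; split=> // y Py; exists y. Qed.

Section TypeMap.
Variables (G : groupType) (P0 P1 : G -> Prop) (b b' : seq G).
Hypotheses (sP0 : is_subgroup P0) (sP1 : is_subgroup P1) (P0P1 : incl_set P0 P1)
  (sz : size b = size b') (stp : same_tp b b' P0)
  (bP1 : forall x, x \in b -> P1 x) (b'P1 : forall x, x \in b' -> P1 x).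

Local Notation R := (tp_rel P0 b b').

Definition tp_dom (x : G) : Prop := exists y, R x y.

Definition tp_map (x : G) : G := epsilon (inhabits 1) (R x).

Lemma tp_mapP x : tp_dom x -> R x (tp_map x).
Proof. by move=> [y Rxy]; apply: (epsilon_spec _ (R x)); exists y. Qed.

Lemma tp_mapE x y : R x y -> tp_map x = y.
Proof.
by move=> Rxy; apply: (tp_rel_fun sz stp _ Rxy); apply: tp_mapP; exists y.
Qed.

Lemma tp_dom_subgroup : is_subgroup tp_dom.
Proof.
have [P01 _] := sP0.
split; first by exists 1; apply: tp_rel_P0.
by split=> [x y [x' Rx] [y' Ry] | x [y Rx]]; eexists;
  [apply: (tp_rel_mul sz Rx Ry) | apply: tp_rel_inv Rx].
Qed.

Lemma tp_dom_P0 : incl_set P0 tp_dom.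
Proof. by move=> c Pc; exists c; apply: tp_rel_P0. Qed.

Lemma tp_map_P0 c : P0 c -> tp_map c = c.
Proof. by move=> Pc; apply/tp_mapE/tp_rel_P0. Qed.

Lemma tp_rel_P1 x y : R x y -> P1 x /\ P1 y.
Proof.
move=> [w [cs [Hc -> ->]]].
by split; apply: ev_in => // z; rewrite mem_cat => /orP [|/Hc /P0P1] //;
  [apply: bP1 | apply: b'P1].
Qed.

Lemma tp_dom_P1 : incl_set tp_dom P1.
Proof. by move=> x [y /tp_rel_P1 []]. Qed.

Lemma tp_map_P1 x : tp_dom x -> P1 (tp_map x).
Proof. by move=> /tp_mapP /tp_rel_P1 []. Qed.

Lemma tp_map_emb : is_emb tp_dom tp_map.
Proof.
split=> x y Dx Dy; first by apply: tp_mapE; apply: (tp_rel_mul sz); apply: tp_mapP.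
move=> E; have Rx := tp_rel_sym (tp_mapP Dx); have Ry := tp_rel_sym (tp_mapP Dy).
by rewrite E in Rx; exact: (tp_rel_fun (esym sz) (same_tp_sym stp) Rx Ry).
Qed.

Lemma b_tp_dom x : x \in b -> tp_dom x.
Proof.
move=> bx; exists (nth 1 b' (index x b)).
by rewrite -{1}(nth_index 1 bx); apply: tp_rel_nth; rewrite index_mem.
Qed.

Lemma map_tp_map : map tp_map b = b'.
Proof.
apply: (@eq_from_nth _ 1); first by rewrite size_map.
move=> i; rewrite size_map => ib.
by rewrite (nth_map 1) //; apply/tp_mapE/tp_rel_nth.
Qed.

End TypeMap.

Section NonSplitting.
Variables (G : groupType) (P0 P1 P2 P3 : G -> Prop).
Hypothesis NF : NF_fin P0 P1 P2 P3.
Variable a : seq G.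
Hypothesis aP2 : forall x, x \in a -> P2 x.

(* The partial isomorphism [b1 |-> b2] over [P0] and the identity of [P2]
   extend to a homomorphism, which then fixes [a] and the parameters [bs]. *)
Lemma NF_ev_eq1 b1 b2 bs w : size b1 = size b2 -> same_tp b1 b2 P0 ->
  (forall x, x \in b1 -> P1 x) -> (forall x, x \in b2 -> P1 x) ->
  (forall c, c \in bs -> P0 c) ->
  ev (b1 ++ a ++ bs) w = 1 -> ev (b2 ++ a ++ bs) w = 1.
Proof.
move=> sz stp b1P1 b2P1 bsP0 E1.
have sP0 := NF_sub0 NF; have sP1 := NF_sub1 NF; have P0P1 := NF_incl01 NF.
have P0P2 := NF_incl02 NF.
have [F [homF _ FE1 FE2]] := NF_extension NF NF (tp_dom_subgroup sP0 sz)
  (NF_sub2 NF) (tp_dom_P0 sz) P0P2 (tp_dom_P1 sP1 P0P1 b1P1 b2P1)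
  (fun x h => h) (is_iso_onto_id P0) (tp_map_emb sz stp) (is_emb_id P2)
  (tp_map_P1 sP1 P0P1 b1P1 b2P1) (fun x h => h) (tp_map_P0 sz stp) (fun x _ => erefl).
have D := gen_subgroup (unionP (tp_dom P0 b1 b2) P2).
have mapF : map F (b1 ++ a ++ bs) = b2 ++ a ++ bs.
  rewrite !map_cat -(map_tp_map sz stp) -{2}(map_id a) -{2}(map_id bs).
  congr (_ ++ _ ++ _); apply/eq_in_map => x.
  - by move/(b_tp_dom P0 b2); apply: FE1.
  - by move/aP2; apply: FE2.
  - by move/bsP0/P0P2; apply: FE2.
have inD x : x \in b1 ++ a ++ bs -> gen (unionP (tp_dom P0 b1 b2) P2) x.
  rewrite !mem_cat => /orP [/(b_tp_dom P0 b2) h | /orP [/aP2 h | /bsP0 /P0P2 h]];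
    apply: gen_in; by [left | right].
by rewrite -mapF -(hom_ev _ D homF inD) E1 (hom1 D homF).
Qed.

End NonSplitting.

Theorem NF_fin_not_split (G : groupType) (P0 P1 P2 P3 : G -> Prop) (a : seq G) :
  NF_fin P0 P1 P2 P3 -> (forall x, x \in a -> P2 x) -> does_not_split a P1 P0.
Proof.
move=> NF aP2 b1 b2 sz b1P1 b2P1 stp [[w bs] pos].
have ev_iff : (forall c, c \in bs -> P0 c) ->
    (ev (b1 ++ a ++ bs) w = 1 <-> ev (b2 ++ a ++ bs) w = 1).
  move=> bsP0; split; apply: (NF_ev_eq1 NF aP2) => //.
  exact: same_tp_sym.
rewrite /tp_bs !size_cat sz -!catA -/(ev _ w) -/(ev _ w).
by split=> -[sc [bsP0 E]]; do 2!split=> //;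
  case: pos E; have [] := ev_iff bsP0; auto.
Qed.

Theorem claim2p9 (G : groupType) (P0 P1 P2 P3 : G -> Prop) :
  NF_fin P0 P1 P2 P3 ->
  (* (1) *)
  NF_fin P0 P2 P1 P3 /\
  (* (2) *)
  (forall P1' P2' P3' : G -> Prop,
     is_subgroup P1' -> is_subgroup P2' -> is_subgroup P3' ->
     incl_set P0 P1' -> incl_set P1' P1 ->
     incl_set P0 P2' -> incl_set P2' P2 ->
     incl_set (unionP P1' P2') P3' -> incl_set P3' P3 ->
     NF_rfin P0 P1' P2' P3') /\
  (* (3) *)
  (forall (G' : groupType) (Q0 Q1 Q2 Q3 : G' -> Prop) (f0 f1 f2 : G' -> G),
     NF_fin Q0 Q1 Q2 Q3 -> generated_by Q3 Q1 Q2 ->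
     is_iso_onto Q0 P0 f0 -> is_iso_onto Q1 P1 f1 -> is_iso_onto Q2 P2 f2 ->
     (forall x, Q0 x -> f1 x = f0 x) -> (forall x, Q0 x -> f2 x = f0 x) ->
     exists f3 : G' -> G,
       is_emb Q3 f3 /\ (forall x, Q3 x -> P3 (f3 x)) /\
       (forall x, Q1 x -> f3 x = f1 x) /\ (forall x, Q2 x -> f3 x = f2 x)) /\
  (* (4) *)
  (forall a : seq G, (forall x, x \in a -> P2 x) -> does_not_split a P1 P0).
Proof.
move=> NF; split; first exact: NF_fin_sym.
split; first by move=> Q1 Q2 Q3; exact: NF_rfin_sub NF.
split; first by move=> G' Q0 Q1 Q2 Q3 f0 f1 f2 NFQ _; exact: NF_fin_iso_extend.
by move=> a aP2; exact: NF_fin_not_split NF aP2.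
Qed.
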